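(* Let $n\ge q\ge 2$ be integers and put $S_1=\sqrt{q^2+4(q-1)(n-2)}$. Let $d$ be an integer and define $j$ by $d=n-1-\frac{n-2+j}{q}$, with $j\in\left[0,\frac{S_1-q}{2}\right)$. Put $s=1-\frac{2d}{n}$, $d_0=n-\frac{j(n-1)}{q(j+q-1)}$, let $e$ be the unique rational number in $(0,1]$ with $d_0+e\in\mathbb{Z}$, and let $$f(t)=\Big(t+1+\tfrac{2e}{n}-\tfrac{2j(n-1)}{nq(j+q-1)}\Big)\Big(t+1+\tfrac{2(e-1)}{n}-\tfrac{2j(n-1)}{nq(j+q-1)}\Big)(t-s)=\sum_{i=0}^3 f_iQ_i^{(n,q)}(t).$$ Let $(\mu_d^*,\mu_{d_0+e-1}^*,\mu_{d_0+e}^* )$ be the unique solution of the linear system $$\mu_d^*\frac{K_l^{(n,q)}(d)}{r_l}+\mu_{d_0+e-1}^*\frac{K_l^{(n,q)}(d_0+e-1)}{r_l}+\mu_{d_0+e}^*\frac{K_l^{(n,q)}(d_0+e)}{r_l}=-1,\qquad l=1,2,3,$$ and for $i=4,5,\dots,n$ set $$\lambda_i^*=1+\mu_d^*\frac{K_i^{(n,q)}(d)}{r_i}+\mu_{d_0+e-1}^*\frac{K_i^{(n,q)}(d_0+e-1)}{r_i}+\mu_{d_0+e}^*\frac{K_i^{(n,q)}(d_0+e)}{r_i}.$$ If $\lambda_i^*\ge 0$ for every integer $i\in[4,n]$, then the bound $A_q(n,s)\le f(1)/f_0$ is the best bound obtainable by the linear programming method: for every real polynomial $h(t)=\sum_{i=0}^{m}h_iQ_i^{(n,q)}(t)$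 of degree $m\le n$ with $h_0>0$, $h_i\ge 0$ for all $i$, and $h(t)\le 0$ for all $t\in T_n\cap[-1,s]$, one has $h(1)/h_0\ge f(1)/f_0$.
   Context: $K_i^{(n,q)}(z)=\sum_{l=0}^{i}(-1)^l(q-1)^{i-l}\binom{z}{l}\binom{n-z}{i-l}$, $r_i=(q-1)^i\binom{n}{i}$, and $Q_i^{(n,q)}(t)=\frac{1}{r_i}K_i^{(n,q)}\!\big(\tfrac{n(1-t)}{2}\big)$. $T_n=\{-1+\frac{2i}{n}: i=0,1,\dots,n\}$. $A_q(n,s)$ is the maximum size of a code in the $q$-ary Hamming space of length $n$ with all pairwise inner products $1-\frac{2d(x,y)}{n}\le s$; the linear programming (Delsarte) bound states $A_q(n,s)\le h(1)/h_0$ for any $h$ as in the claim. *)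

From HB Require Import structures.
From mathcomp Require Import all_boot all_order all_algebra.
From mathcomp Require Import reals.
Set Implicit Arguments. Unset Strict Implicit. Unset Printing Implicit Defensive.
Import Order.TTheory GRing.Theory Num.Theory.
Local Open Scope ring_scope.

Section Defs.
Variable R : realType.

Definition gbinom (z : R) (l : nat) : R :=
  (\prod_(k < l) (z - k%:R)) / (l`!)%:R.

Definition kraw (n q i : nat) (z : R) : R :=
  \sum_(l < i.+1) (-1) ^+ l * ((q - 1)%:R) ^+ (i - l)
                  * gbinom z l * gbinom (n%:R - z) (i - l).

Definition rr (n q i : nat) : R := ((q - 1)%:R) ^+ i * ('C(n, i))%:R.

Definition Qpol (n q i : nat) (t : R) : R :=
  kraw n q i (n%:R * (1 - t) / 2) / rr n q i.

Definition inTn (n : nat) (t : R) : Prop :=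
  exists2 i : nat, (i <= n)%N & t = -1 + 2 * i%:R / n%:R.

End Defs.

(* Linear programming duality, with a dual certificate supported on the nodes
   d, d0 + e - 1 and d0 + e.  Put lambda_i = 1 + sum_k mu_k K_i(x_k) / r_i.  For
   every h = sum_i h_i Q_i, the value h(1) + sum_k mu_k h(t_k) equals
   sum_i h_i lambda_i, where lambda_1 = lambda_2 = lambda_3 = 0 by the choice of
   the mu_k and lambda_i >= 0 for i >= 4 by hypothesis.  Once the mu_k are known to
   be nonnegative, feasibility of h at the nodes gives h(1) >= h_0 lambda_0, while
   f, which vanishes at the nodes, gives f(1) = f_0 lambda_0; hence
   h(1)/h_0 >= lambda_0 = f(1)/f_0.

   The nonnegativity of the mu_k is the heart of the matter.  As K_1, K_2, K_3 have
   mean zero under Bin(n, (q-1)/q), the system for the mu_k says that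
   g |-> g(0) + sum_k mu_k g(x_k) agrees with lambda_0 E[g(X)] on cubics g.  Testing
   it on the cubic vanishing at the three nodes shows lambda_0 > 0, and testing it
   on the cubics vanishing at 0 and at two of the nodes isolates each mu_k.  The
   signs of the binomial expectations involved are polynomial inequalities in n, q
   and j, and this is where the bound on j enters. *)

From HB Require Import structures.
From mathcomp Require Import all_boot all_order all_algebra.
From mathcomp Require Import reals ring lra.
Set Implicit Arguments. Unset Strict Implicit. Unset Printing Implicit Defensive.
Import Order.TTheory GRing.Theory Num.Theory.
Local Open Scope ring_scope.

Section Krawtchouk.
Variable R : realType.

Lemma gbinom0 (z : R) : gbinom z 0 = 1.
Proof. by rewrite /gbinom big_ord0 divr1. Qed.

Lemma gbinom1 (z : R) : gbinom z 1 = z.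
Proof. by rewrite /gbinom big_ord_recr big_ord0 /= mul1r subr0 divr1. Qed.

Lemma gbinom2 (z : R) : gbinom z 2 = z * (z - 1) / 2.
Proof. by rewrite /gbinom !big_ord_recr big_ord0 /= mul1r subr0. Qed.

Lemma gbinom3 (z : R) : gbinom z 3 = z * (z - 1) * (z - 2) / 6.
Proof. by rewrite /gbinom !big_ord_recr big_ord0 /= mul1r subr0. Qed.

Lemma gbinom0S (l : nat) : gbinom (0 : R) l.+1 = 0.
Proof. by rewrite /gbinom big_ord_recl /= subr0 !mul0r. Qed.

Lemma gbinom_nat (n i : nat) : (i <= n)%N -> gbinom (n%:R : R) i = 'C(n, i)%:R.
Proof.
move=> le_in; rewrite /gbinom.
have -> : \prod_(k < i) ((n%:R : R) - k%:R) = (n ^_ i)%:R.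
  rewrite ffact_prod natr_prod; apply: eq_bigr => k _.
  by rewrite natrB // ltnW // (leq_trans (ltn_ord k) le_in).
by rewrite -bin_ffact natrM mulfK // pnatr_eq0 -lt0n fact_gt0.
Qed.

Variables n q : nat.
Local Notation N := (n%:R : R).
Local Notation Q := (q%:R : R).
Hypothesis q_gt0 : (0 < q)%N.

Lemma kraw1 (z : R) : kraw n q 1 z = (Q - 1) * (N - z) - z.
Proof. by rewrite /kraw !big_ord_recr big_ord0 /= !gbinom0 !gbinom1 natrB //; ring. Qed.

Lemma kraw2 (z : R) : kraw n q 2 z =
  (Q - 1) ^+ 2 * ((N - z) * (N - z - 1) / 2) - (Q - 1) * (z * (N - z)) + z * (z - 1) / 2.
Proof.
by rewrite /kraw !big_ord_recr big_ord0 /= !gbinom0 !gbinom1 !gbinom2 natrB //; ring.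
Qed.

Lemma kraw3 (z : R) : kraw n q 3 z =
  (Q - 1) ^+ 3 * ((N - z) * (N - z - 1) * (N - z - 2) / 6)
  - (Q - 1) ^+ 2 * (z * ((N - z) * (N - z - 1) / 2))
  + (Q - 1) * (z * (z - 1) / 2 * (N - z)) - z * (z - 1) * (z - 2) / 6.
Proof.
rewrite /kraw !big_ord_recr big_ord0 /= !gbinom0 !gbinom1 !gbinom2 !gbinom3 natrB //.
by ring.
Qed.

Lemma rr1 : rr R n q 1 = (Q - 1) * N.
Proof. by rewrite /rr expr1 bin1 natrB. Qed.

Lemma rr2 : (2 <= n)%N -> rr R n q 2 = (Q - 1) ^+ 2 * (N * (N - 1) / 2).
Proof. by move=> n_ge2; rewrite /rr -gbinom_nat // gbinom2 natrB. Qed.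

Lemma rr3 : (3 <= n)%N -> rr R n q 3 = (Q - 1) ^+ 3 * (N * (N - 1) * (N - 2) / 6).
Proof. by move=> n_ge3; rewrite /rr -gbinom_nat // gbinom3 natrB. Qed.

Lemma kraw_at0 (i : nat) : (i <= n)%N -> kraw n q i 0 = rr R n q i.
Proof.
move=> le_in; rewrite /kraw /rr big_ord_recl /= gbinom0 subr0 subn0 expr0 mul1r mulr1.
rewrite gbinom_nat // big1 ?addr0 // => l _.
by rewrite /bump /= add1n gbinom0S mulr0 mul0r.
Qed.

Lemma rr_neq0 (i : nat) : (2 <= q)%N -> (i <= n)%N -> rr R n q i != 0.
Proof.
move=> q_ge2 le_in; rewrite /rr mulf_neq0 ?expf_neq0 // pnatr_eq0 -lt0n ?bin_gt0 //.
by rewrite subn_gt0.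
Qed.

Lemma Qpol_dist (i : nat) (z : R) : N != 0 ->
  Qpol n q i (1 - 2 * z / N) = kraw n q i z / rr R n q i.
Proof. by move=> N_neq0; rewrite /Qpol; congr (kraw _ _ _ _ / _); field. Qed.

Lemma Qpol_at1 (i : nat) : (2 <= q)%N -> (i <= n)%N -> Qpol n q i 1 = 1 :> R.
Proof.
move=> q_ge2 le_in.
by rewrite /Qpol subrr mulr0 mul0r kraw_at0 // divff // rr_neq0.
Qed.

End Krawtchouk.

Section BinomialMoments.
Variable R : comPzRingType.

Definition bin_mom1 (N p : R) := N * p.
Definition bin_mom2 (N p : R) := N * (N - 1) * p ^+ 2 + N * p.
Definition bin_mom3 (N p : R) :=
  N * (N - 1) * (N - 2) * p ^+ 3 + 3 * N * (N - 1) * p ^+ 2 + N * p.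

Definition cubic (r1 r2 r3 z : R) := (z - r1) * (z - r2) * (z - r3).

Definition bin_cubic_mean (N p r1 r2 r3 : R) :=
  bin_mom3 N p - (r1 + r2 + r3) * bin_mom2 N p
  + (r1 * r2 + r2 * r3 + r1 * r3) * bin_mom1 N p - r1 * r2 * r3.

End BinomialMoments.

Section LinearCombination.
Variable R : pzRingType.

Lemma eq_lincomb1 (c a b x y : R) : a = b -> x - y = c * (a - b) -> x = y.
Proof. by move=> -> /eqP; rewrite subrr mulr0 subr_eq0 => /eqP. Qed.

Lemma eq_lincomb2 (c c' a b a' b' x y : R) :
  a = b -> a' = b' -> x - y = c * (a - b) + c' * (a' - b') -> x = y.
Proof. by move=> -> -> /eqP; rewrite !subrr !mulr0 addr0 subr_eq0 => /eqP. Qed.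

Lemma eq_lincomb3 (c c' c'' a b a' b' a'' b'' x y : R) :
  a = b -> a' = b' -> a'' = b'' ->
  x - y = c * (a - b) + c' * (a' - b') + c'' * (a'' - b'') -> x = y.
Proof. by move=> -> -> -> /eqP; rewrite !subrr !mulr0 !addr0 subr_eq0 => /eqP. Qed.

End LinearCombination.

Section Quadrature.
Variable R : realType.
Variables (n q : nat) (x1 x2 x3 mu1 mu2 mu3 : R).
Hypotheses (q_ge2 : (2 <= q)%N) (n_ge3 : (3 <= n)%N).
Hypothesis krawtchouk_system : forall l : nat, (1 <= l <= 3)%N ->
  mu1 * (kraw n q l x1 / rr R n q l) + mu2 * (kraw n q l x2 / rr R n q l)
  + mu3 * (kraw n q l x3 / rr R n q l) = -1.

Local Notation N := (n%:R : R).
Local Notation Q := (q%:R : R).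
Local Notation L := (1 + mu1 + mu2 + mu3).

Lemma krawtchouk_quadrature (r1 r2 r3 : R) :
  cubic r1 r2 r3 0 + mu1 * cubic r1 r2 r3 x1 + mu2 * cubic r1 r2 r3 x2
  + mu3 * cubic r1 r2 r3 x3 = L * bin_cubic_mean N ((Q - 1) / Q) r1 r2 r3.
Proof.
have q_gt0 : (0 < q)%N by apply: ltnW.
have n_ge2 : (2 <= n)%N by apply: ltnW.
have N_ge3 : 3 <= N by rewrite ler_nat.
have Q_ge2 : 2 <= Q by rewrite ler_nat.
have [N0 N1 N2] : [/\ N != 0, N - 1 != 0 & N - 2 != 0] by split; rewrite gt_eqF //; lra.
have [Q0 Q1] : Q != 0 /\ Q - 1 != 0 by split; rewrite gt_eqF //; lra.
have := (@krawtchouk_system 1 isT); rewrite !kraw1 // rr1 // => K1.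
have := (@krawtchouk_system 2 isT); rewrite !kraw2 // rr2 // => K2.
have := (@krawtchouk_system 3 isT); rewrite !kraw3 // rr3 // => K3.
have M1 : mu1 * x1 + mu2 * x2 + mu3 * x3 = L * bin_mom1 N ((Q - 1) / Q).
  apply: (eq_lincomb1 (c := - ((Q - 1) * N / Q)) K1).
  by rewrite /bin_mom1; field; rewrite N0 Q0 Q1.
have M2 : mu1 * x1 ^+ 2 + mu2 * x2 ^+ 2 + mu3 * x3 ^+ 2 = L * bin_mom2 N ((Q - 1) / Q).
  apply: (eq_lincomb2 (c := (Q - 1) ^+ 2 * N * (N - 1) / Q ^+ 2)
                      (c' := (2 * N * (Q - 1) - Q + 2) / Q) K2 M1).
  by rewrite /bin_mom1 /bin_mom2; field; rewrite N0 N1 Q0 Q1.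
have M3 : mu1 * x1 ^+ 3 + mu2 * x2 ^+ 3 + mu3 * x3 ^+ 3 = L * bin_mom3 N ((Q - 1) / Q).
  apply: (eq_lincomb3 (c := - ((Q - 1) ^+ 3 * N * (N - 1) * (N - 2) / Q ^+ 3))
    (c' := - ((3 * N ^+ 2 * (Q - 1) ^+ 2 - 3 * N * (Q - 1) * (2 * Q - 3)
               + 2 * (Q ^+ 2 - 3 * Q + 3)) / Q ^+ 2))
    (c'' := 3 * (N * Q - N - Q + 2) / Q) K3 M1 M2).
  by rewrite /bin_mom1 /bin_mom2 /bin_mom3; field; rewrite N0 N1 N2 Q0 Q1.
apply: (eq_lincomb3 (c := 1) (c' := - (r1 + r2 + r3)) (c'' := r1 * r2 + r2 * r3 + r1 * r3)
  M3 M2 M1).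
by rewrite /cubic /bin_cubic_mean; ring.
Qed.
End Quadrature.

Section DualWeights.
Variable R : realFieldType.

Definition dist_d (N Q j : R) := N - 1 - (N - 2 + j) / Q.
Definition dist_d0 (N Q j : R) := N - j * (N - 1) / (Q * (j + Q - 1)).

Definition admissible (N Q j : R) :=
  [/\ 2 <= Q, Q <= N, 0 <= j & j ^+ 2 + Q * j < (Q - 1) * (N - 2)].

Variables N Q j : R.
Hypothesis adm : admissible N Q j.

Local Notation d := (dist_d N Q j).
Local Notation d0 := (dist_d0 N Q j).
Local Notation p := ((Q - 1) / Q).
Local Notation K := (j ^+ 2 + Q * j - (Q - 1) * (N - 2)).

Let Q_neq0 : Q != 0. Proof. by case: adm => *; rewrite gt_eqF //; lra. Qed.
Let jQ_neq0 : j + Q - 1 != 0. Proof. by case: adm => *; rewrite gt_eqF //; lra. Qed.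
Let scale_gt0 : 0 < Q ^+ 3 * (j + Q - 1) ^+ 2.
Proof. by case: adm => *; rewrite mulr_gt0 // exprn_gt0 //; lra. Qed.

Lemma adm_N_gt2 : 2 < N.
Proof.
have [Q_ge2 _ j_ge0 j_small] := adm.
have Qj_ge0 : 0 <= Q * j by apply: mulr_ge0; lra.
have : 0 < (Q - 1) * (N - 2) by have := sqr_ge0 j; lra.
by rewrite pmulr_rgt0 ?subr_gt0 //; lra.
Qed.

Lemma dist_d0_leN : d0 <= N.
Proof.
have [Q_ge2 Q_leN j_ge0 _] := adm.
by rewrite /dist_d0 lerBlDr lerDl; apply: divr_ge0; apply: mulr_ge0; lra.
Qed.

Lemma dist_d_gt0 : 0 < d.
Proof.
have [Q_ge2 _ j_ge0 j_small] := adm.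
have -> : d = ((Q - 1) * (N - 2) + Q - j) / Q by rewrite /dist_d; field.
rewrite divr_gt0 //; last lra.
have : j <= Q * j by rewrite ler_peMl //; lra.
have : 0 <= j ^+ 2 by apply: sqr_ge0.
lra.
Qed.

Lemma dist_d_le_d0 : d <= d0 - 1.
Proof.
have [Q_ge2 _ j_ge0 _] := adm; have N_gt2 := adm_N_gt2.
have scaled : (d0 - 1 - d) * (Q * (j + Q - 1)) =
    (N - 2) * (Q - 1) + j ^+ 2 + j * (Q - 2).
  by rewrite /dist_d /dist_d0; field; rewrite Q_neq0 jQ_neq0.
rewrite -subr_ge0 -(pmulr_lge0 _ (_ : 0 < Q * (j + Q - 1))) ?scaled.
  have : 0 <= (N - 2) * (Q - 1) by apply: mulr_ge0; lra.
  have : 0 <= j * (Q - 2) by apply: mulr_ge0; lra.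
  have : 0 <= j ^+ 2 by apply: sqr_ge0.
  lra.
by apply: mulr_gt0; lra.
Qed.

Lemma bin_mom2_sub_gt0 : 0 < bin_mom2 N p - d * bin_mom1 N p.
Proof.
have [Q_ge2 _ j_ge0 _] := adm; have N_gt2 := adm_N_gt2.
have -> : bin_mom2 N p - d * bin_mom1 N p = N * (Q - 1) * (Q - 1 + j) / Q ^+ 2.
  by rewrite /bin_mom1 /bin_mom2 /dist_d; field.
apply: divr_gt0; last by rewrite exprn_gt0 //; lra.
by rewrite !mulr_gt0 //; lra.
Qed.

Lemma cubic_mean_0_d (x : R) :
  bin_cubic_mean N p 0 d x = (bin_mom2 N p - d * bin_mom1 N p) * (d0 - x).
Proof.
rewrite /bin_cubic_mean /bin_mom1 /bin_mom2 /bin_mom3 /dist_d /dist_d0.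
by field; rewrite Q_neq0 jQ_neq0.
Qed.

Lemma cubic_mean_d_d0_pred_le0 : bin_cubic_mean N p d (d0 - 1) d0 <= 0.
Proof.
have [Q_ge2 Q_leN j_ge0 j_small] := adm; have N_gt2 := adm_N_gt2.
rewrite -(pmulr_lle0 _ scale_gt0).
have -> : bin_cubic_mean N p d (d0 - 1) d0 * (Q ^+ 3 * (j + Q - 1) ^+ 2) =
    (N - 1) * (Q - 1) * (Q + j - 2) * K - 2 * (Q - 1) ^+ 2 * (N - 1) * (N + Q + j - 2).
  rewrite /bin_cubic_mean /bin_mom1 /bin_mom2 /bin_mom3 /dist_d /dist_d0.
  by field; rewrite Q_neq0 jQ_neq0.
have : (N - 1) * (Q - 1) * (Q + j - 2) * K <= 0.
  by apply: mulr_ge0_le0; rewrite ?mulr_ge0 //; lra.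
have : 0 <= (Q - 1) ^+ 2 * (N - 1) * (N + Q + j - 2).
  by rewrite !mulr_ge0 ?sqr_ge0 //; lra.
lra.
Qed.

Lemma cubic_mean_d_d0_succ_le0 : bin_cubic_mean N p d d0 (d0 + 1) <= 0.
Proof.
have [Q_ge2 Q_leN j_ge0 j_small] := adm; have N_gt2 := adm_N_gt2.
rewrite -(pmulr_lle0 _ scale_gt0).
have -> : bin_cubic_mean N p d d0 (d0 + 1) * (Q ^+ 3 * (j + Q - 1) ^+ 2) =
    ((N + 1) * (Q - 1) * (Q + j - 2) + 2 * j) * K
    - (2 * (Q - 1) * (N ^+ 2 * (Q - 1) + N * (Q - 1) ^+ 2 + (Q - 1) * (Q - 2))
       + 2 * j * ((N + 1) * (Q - 1) ^+ 2 - 2) + 4 * j ^+ 2 + 4 * Q * j).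
  rewrite /bin_cubic_mean /bin_mom1 /bin_mom2 /bin_mom3 /dist_d /dist_d0.
  by field; rewrite Q_neq0 jQ_neq0.
have : ((N + 1) * (Q - 1) * (Q + j - 2) + 2 * j) * K <= 0.
  apply: mulr_ge0_le0; last lra.
  have : 0 <= (N + 1) * (Q - 1) * (Q + j - 2) by rewrite !mulr_ge0 //; lra.
  lra.
have : 0 <= N ^+ 2 * (Q - 1) + N * (Q - 1) ^+ 2 + (Q - 1) * (Q - 2).
  by rewrite !addr_ge0 ?mulr_ge0 ?sqr_ge0 //; lra.
move=> big_ge0; have : 0 <= 2 * (Q - 1) * (N ^+ 2 * (Q - 1) + N * (Q - 1) ^+ 2
                                            + (Q - 1) * (Q - 2)).
  by rewrite !mulr_ge0 //; lra.
have : 2 <= (N + 1) * (Q - 1) ^+ 2.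
  have Q1_sq : 1 <= (Q - 1) ^+ 2 by rewrite expr_ge1 //; lra.
  have : (N + 1) * 1 <= (N + 1) * (Q - 1) ^+ 2 by rewrite ler_pM2l //; lra.
  lra.
move=> NQ_ge2; have : 0 <= 2 * j * ((N + 1) * (Q - 1) ^+ 2 - 2).
  by rewrite !mulr_ge0 // subr_ge0.
have : 0 <= Q * j by rewrite mulr_ge0 //; lra.
have : 0 <= j ^+ 2 by apply: sqr_ge0.
lra.
Qed.

Lemma cubic_mean_d_le0 (e : R) : 0 <= e <= 1 ->
  bin_cubic_mean N p d (d0 + e - 1) (d0 + e) <= 0.
Proof.
move=> /andP [e_ge0 e_le1]; have [Q_ge2 _ j_ge0 _] := adm.
have convex : 0 <= bin_mom1 N p - d.
  have -> : bin_mom1 N p - d = (Q + j - 2) / Q by rewrite /bin_mom1 /dist_d; field.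
  by rewrite divr_ge0 //; lra.
have -> : bin_cubic_mean N p d (d0 + e - 1) (d0 + e) =
    (1 - e) * bin_cubic_mean N p d (d0 - 1) d0 + e * bin_cubic_mean N p d d0 (d0 + 1)
    - (bin_mom1 N p - d) * (e * (1 - e)).
  by rewrite /bin_cubic_mean; ring.
have := cubic_mean_d_d0_pred_le0; have := cubic_mean_d_d0_succ_le0 => F1 F0.
have : 0 <= (bin_mom1 N p - d) * (e * (1 - e)) by rewrite !mulr_ge0 //; lra.
have : (1 - e) * bin_cubic_mean N p d (d0 - 1) d0 <= 0 by rewrite mulr_ge0_le0 //; lra.
have : e * bin_cubic_mean N p d d0 (d0 + 1) <= 0 by rewrite mulr_ge0_le0.
lra.
Qed.

Lemma cubic_mean_0_d0_pred_gt0 : 0 < bin_cubic_mean N p 0 (d0 - 1) d0.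
Proof.
have [Q_ge2 Q_leN j_ge0 _] := adm; have N_gt2 := adm_N_gt2.
rewrite -(pmulr_lgt0 _ scale_gt0).
have -> : bin_cubic_mean N p 0 (d0 - 1) d0 * (Q ^+ 3 * (j + Q - 1) ^+ 2) =
    N * (Q - 1) ^+ 2 * (N - 1) * (j ^+ 2 + (Q - 2) * j + (Q - 1) * (N - 2)).
  rewrite /bin_cubic_mean /bin_mom1 /bin_mom2 /bin_mom3 /dist_d0.
  by field; rewrite Q_neq0 jQ_neq0.
apply: mulr_gt0; first by rewrite !mulr_gt0 ?exprn_gt0 //; lra.
have : 0 <= (Q - 2) * j by rewrite mulr_ge0 //; lra.
have : 0 < (Q - 1) * (N - 2) by rewrite mulr_gt0 //; lra.
have : 0 <= j ^+ 2 by apply: sqr_ge0.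
lra.
Qed.

Lemma cubic_mean_0_gt0 (e : R) : 0 <= e ->
  0 < bin_cubic_mean N p 0 (d0 + e - 1) (d0 + e).
Proof.
move=> e_ge0; have [Q_ge2 Q_leN j_ge0 j_small] := adm; have N_gt2 := adm_N_gt2.
(* For X ~ Bin(N, p), [u |-> E[X (X - u) (X - u - 1)]] increases for
   [u >= (N - 1) p + 1/2], and [d0 - 1] lies in that range. *)
have vertex : 0 <= 2 * d0 - 3 - 2 * (N - 1) * p.
  have scaled : (2 * d0 - 3 - 2 * (N - 1) * p) * (Q * (j + Q - 1)) =
      (Q - 1) * (N - 2) + (Q - 1) * (N - Q) - Q * j.
    by rewrite /dist_d0; field; rewrite Q_neq0 jQ_neq0.
  rewrite -(pmulr_lge0 _ (_ : 0 < Q * (j + Q - 1))) ?scaled; last by rewrite mulr_gt0 //; lra.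
  have : 0 <= (Q - 1) * (N - Q) by rewrite mulr_ge0 //; lra.
  have : 0 <= j ^+ 2 by apply: sqr_ge0.
  lra.
have -> : bin_cubic_mean N p 0 (d0 + e - 1) (d0 + e) = bin_cubic_mean N p 0 (d0 - 1) d0
    + e * (N * p * ((2 * d0 - 3 - 2 * (N - 1) * p) + e)).
  by rewrite /bin_cubic_mean /bin_mom1 /bin_mom2; ring.
have Np_ge0 : 0 <= N * p by rewrite mulr_ge0 ?divr_ge0 //; lra.
have : 0 <= e * (N * p * ((2 * d0 - 3 - 2 * (N - 1) * p) + e)).
  by rewrite mulr_ge0 // mulr_ge0 // addr_ge0.
have := cubic_mean_0_d0_pred_gt0; lra.
Qed.

Lemma dual_weights_ge0 (e mu1 mu2 mu3 : R) : 0 < e -> e <= 1 ->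
  (forall r1 r2 r3 : R,
     cubic r1 r2 r3 0 + mu1 * cubic r1 r2 r3 d + mu2 * cubic r1 r2 r3 (d0 + e - 1)
     + mu3 * cubic r1 r2 r3 (d0 + e)
     = (1 + mu1 + mu2 + mu3) * bin_cubic_mean N p r1 r2 r3) ->
  [/\ 0 <= mu1, 0 <= mu2, 0 <= mu3 & (e = 1 -> mu3 = 0)].
Proof.
move=> e_gt0 e_le1 quad; set L := 1 + mu1 + mu2 + mu3 in quad.
have d_gt0 := dist_d_gt0; have d_le := dist_d_le_d0; have c_gt0 := bin_mom2_sub_gt0.
have W0 : L * bin_cubic_mean N p d (d0 + e - 1) (d0 + e) = - (d * (d0 + e - 1) * (d0 + e)).
  by rewrite -quad /cubic; ring.
have W1 : mu1 * (d * (d0 + e - 1 - d) * (d0 + e - d)) =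
    L * bin_cubic_mean N p 0 (d0 + e - 1) (d0 + e).
  by rewrite -quad /cubic; ring.
have W2 : mu2 * ((d0 + e - 1) * (d0 + e - 1 - d)) =
    L * ((bin_mom2 N p - d * bin_mom1 N p) * e).
  apply: (eq_lincomb1 (c := -1) (quad 0 d (d0 + e))).
  by rewrite cubic_mean_0_d /cubic; ring.
have W3 : mu3 * ((d0 + e) * (d0 + e - d)) =
    L * ((bin_mom2 N p - d * bin_mom1 N p) * (1 - e)).
  apply: (eq_lincomb1 (c := 1) (quad 0 d (d0 + e - 1))).
  by rewrite cubic_mean_0_d /cubic; ring.
have L_gt0 : 0 < L.
  rewrite ltNge; apply/negP => L_le0.
  have : 0 <= L * bin_cubic_mean N p d (d0 + e - 1) (d0 + e).
    by rewrite mulr_le0 // cubic_mean_d_le0 ?(ltW e_gt0).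
  by rewrite W0 oppr_ge0 lt_geF // !mulr_gt0 //; lra.
have X3_gt0 : 0 < (d0 + e) * (d0 + e - d) by rewrite mulr_gt0 //; lra.
split.
- rewrite -(pmulr_lge0 _ (_ : 0 < d * (d0 + e - 1 - d) * (d0 + e - d))).
    by rewrite W1 ltW // mulr_gt0 // cubic_mean_0_gt0 // ltW.
  by rewrite !mulr_gt0 //; lra.
- rewrite -(pmulr_lge0 _ (_ : 0 < (d0 + e - 1) * (d0 + e - 1 - d))).
    by rewrite W2 !mulr_ge0 // ltW.
  by rewrite mulr_gt0 //; lra.
- rewrite -(pmulr_lge0 _ X3_gt0) W3 mulr_ge0 ?(ltW L_gt0) //.
  by rewrite mulr_ge0 ?(ltW c_gt0) ?subr_ge0.
- move=> e1; have : mu3 * ((d0 + e) * (d0 + e - d)) = 0 by rewrite W3 e1 subrr !mulr0.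
  by move/eqP; rewrite mulf_eq0 (gt_eqF X3_gt0) orbF => /eqP.
Qed.

End DualWeights.

Lemma lt_quadratic_root (R : rcfType) (a b x : R) : 0 <= 2 * x + a ->
  x < (Num.sqrt (a ^+ 2 + 4 * b) - a) / 2 -> x ^+ 2 + a * x < b.
Proof.
move=> x_ge x_lt.
have lt_sqrt : 2 * x + a < Num.sqrt (a ^+ 2 + 4 * b) by lra.
have disc_ge0 : 0 <= a ^+ 2 + 4 * b by apply: ltW; rewrite -sqrtr_gt0; lra.
have : (2 * x + a) ^+ 2 < a ^+ 2 + 4 * b.
  by rewrite -[X in _ < X]sqr_sqrtr // ltr_pXn2r // ?nnegrE // sqrtr_ge0.
have -> : (2 * x + a) ^+ 2 = 4 * (x ^+ 2 + a * x) + a ^+ 2 by ring.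
lra.
Qed.

Lemma admissible_of_lt_root (R : rcfType) (N Q j : R) :
  2 <= Q -> Q <= N -> 0 <= j ->
  j < (Num.sqrt (Q ^+ 2 + 4 * (Q - 1) * (N - 2)) - Q) / 2 -> admissible N Q j.
Proof.
move=> Q_ge2 Q_leN j_ge0; rewrite -mulrA => j_lt.
by split=> //; apply: lt_quadratic_root j_lt; lra.
Qed.

Lemma dist_ip_bounds (R : realFieldType) (N x y : R) : 0 < N -> y <= x -> x <= N ->
  -1 <= 1 - 2 * x / N <= 1 - 2 * y / N.
Proof.
move=> N_gt0 le_yx le_xN.
have : x / N <= 1 by rewrite ler_pdivrMr // mul1r.
have : y / N <= x / N by rewrite ler_pM2r // invr_gt0.
by rewrite -!mulrA => *; apply/andP; split; lra.
Qed.

Lemma inTn_dist (R : realType) (n : nat) (z : int) : (0 < n)%N ->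
  0 <= z%:~R :> R -> z%:~R <= n%:R :> R -> inTn n (1 - 2 * z%:~R / n%:R : R).
Proof.
case: z => [k | k] n_gt0; last by rewrite NegzE intrN oppr_ge0 lerz0.
rewrite pmulrn ler_nat => _ le_kn.
exists (n - k)%N; first exact: leq_subr.
by rewrite natrB //; field; rewrite pnatr_eq0 -lt0n.
Qed.

Lemma feasible_at_dist (R : realType) (n q m : nat) (h : nat -> R) (s : R) (d z : int) :
  (0 < n)%N -> s = 1 - 2 * d%:~R / n%:R ->
  (forall t : R, inTn n t -> -1 <= t -> t <= s ->
     \sum_(i < m.+1) h i * Qpol n q i t <= 0) ->
  d%:~R <= z%:~R :> R -> z%:~R <= n%:R :> R -> 0 <= d%:~R :> R ->
  \sum_(i < m.+1) h i * Qpol n q i (1 - 2 * z%:~R / n%:R) <= 0.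
Proof.
move=> n_gt0 def_s h_feasible le_dz le_zn d_ge0.
have N_gt0 : 0 < n%:R :> R by rewrite ltr0n.
have /andP [lo hi] := dist_ip_bounds N_gt0 le_dz le_zn.
apply: h_feasible => //; last by rewrite def_s.
by apply: inTn_dist => //; lra.
Qed.

Section LPDuality.
Variable R : realType.
Variables (n q : nat) (mu1 mu2 mu3 x1 x2 x3 : R).
Hypotheses (q_ge2 : (2 <= q)%N) (n_ge3 : (3 <= n)%N).

Definition dual_coef (i : nat) :=
  1 + mu1 * (kraw n q i x1 / rr R n q i) + mu2 * (kraw n q i x2 / rr R n q i)
  + mu3 * (kraw n q i x3 / rr R n q i).

Hypothesis dual_system : forall l : nat, (1 <= l <= 3)%N ->
  mu1 * (kraw n q l x1 / rr R n q l) + mu2 * (kraw n q l x2 / rr R n q l)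
  + mu3 * (kraw n q l x3 / rr R n q l) = -1.
Hypothesis dual_coef_ge4 : forall i : nat, (4 <= i <= n)%N -> 0 <= dual_coef i.

Local Notation ip x := (1 - 2 * x / n%:R).

Let n_gt0 : (0 < n)%N. Proof. exact: leq_trans n_ge3. Qed.

Lemma dual_coef_eq0 (l : nat) : (1 <= l <= 3)%N -> dual_coef l = 0.
Proof. by move=> l_range; have := dual_system l_range; rewrite /dual_coef; lra. Qed.

Lemma dual_coef_ge0 (i : nat) : (1 <= i <= n)%N -> 0 <= dual_coef i.
Proof.
move=> /andP [i_ge1 i_le_n]; have [i_le3 | i_gt3] := leqP i 3.
  by rewrite dual_coef_eq0 // i_ge1.
by rewrite dual_coef_ge4 // i_gt3.
Qed.

Lemma dual_identity (c : nat -> R) (M : nat) : (M <= n)%N ->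
  \sum_(i < M.+1) c i * Qpol n q i 1
  + mu1 * \sum_(i < M.+1) c i * Qpol n q i (ip x1)
  + mu2 * \sum_(i < M.+1) c i * Qpol n q i (ip x2)
  + mu3 * \sum_(i < M.+1) c i * Qpol n q i (ip x3)
  = \sum_(i < M.+1) c i * dual_coef i.
Proof.
move=> le_Mn; rewrite !mulr_sumr -!big_split /=; apply: eq_bigr => i _.
have le_in : (i <= n)%N by rewrite (leq_trans _ le_Mn) // -ltnS.
rewrite !Qpol_dist ?pnatr_eq0 -?lt0n // Qpol_at1 // /dual_coef; ring.
Qed.

Lemma dual_lower_bound (h : nat -> R) (M : nat) : (M <= n)%N ->
  (forall i, (i <= M)%N -> 0 <= h i) ->
  mu1 * \sum_(i < M.+1) h i * Qpol n q i (ip x1) <= 0 ->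
  mu2 * \sum_(i < M.+1) h i * Qpol n q i (ip x2) <= 0 ->
  mu3 * \sum_(i < M.+1) h i * Qpol n q i (ip x3) <= 0 ->
  h 0%N * dual_coef 0 <= \sum_(i < M.+1) h i * Qpol n q i 1.
Proof.
move=> le_Mn h_ge0 node1 node2 node3.
have : h 0%N * dual_coef 0 <= \sum_(i < M.+1) h i * dual_coef i.
  rewrite big_ord_recl lerDl sumr_ge0 // => i _.
  by rewrite mulr_ge0 ?h_ge0 ?dual_coef_ge0 //= (leq_trans _ le_Mn).
rewrite -dual_identity //; lra.
Qed.

Lemma dual_value (f : nat -> R) :
  (forall t : R, (t - ip x1) * (t - ip x2) * (t - ip x3) = \sum_(i < 4) f i * Qpol n q i t) ->
  (1 - ip x1) * (1 - ip x2) * (1 - ip x3) = f 0%N * dual_coef 0.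
Proof.
move=> def_f; rewrite def_f; have := dual_identity f n_ge3.
rewrite -!def_f !subrr !(mulr0, mul0r) !addr0 => ->.
by rewrite big_ord_recl big1 ?addr0 // => i _; rewrite dual_coef_eq0 ?mulr0 //= ltn_ord.
Qed.

Lemma lp_ratio_bound (h f : nat -> R) (M : nat) : (M <= n)%N ->
  0 < h 0%N -> (forall i, (i <= M)%N -> 0 <= h i) ->
  mu1 * \sum_(i < M.+1) h i * Qpol n q i (ip x1) <= 0 ->
  mu2 * \sum_(i < M.+1) h i * Qpol n q i (ip x2) <= 0 ->
  mu3 * \sum_(i < M.+1) h i * Qpol n q i (ip x3) <= 0 ->
  0 < x1 -> 0 < x2 -> 0 < x3 ->
  (forall t : R, (t - ip x1) * (t - ip x2) * (t - ip x3) = \sum_(i < 4) f i * Qpol n q i t) ->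
  (1 - ip x1) * (1 - ip x2) * (1 - ip x3) / f 0%N
  <= (\sum_(i < M.+1) h i * Qpol n q i 1) / h 0%N.
Proof.
move=> le_Mn h0_gt0 h_ge0 node1 node2 node3 x1_gt0 x2_gt0 x3_gt0 def_f.
have := dual_lower_bound le_Mn h_ge0 node1 node2 node3.
have N_gt0 : 0 < n%:R :> R by rewrite ltr0n.
have f1_gt0 : 0 < (1 - ip x1) * (1 - ip x2) * (1 - ip x3).
  by rewrite !subKr !mulr_gt0 ?invr_gt0.
rewrite (dual_value def_f) in f1_gt0 *.
have f0_neq0 : f 0%N != 0 by apply: contraTneq f1_gt0 => ->; rewrite mul0r ltxx.
by rewrite mulrAC divff // mul1r ler_pdivlMr // mulrC.
Qed.

End LPDuality.

Theorem theorem4 (R : realType) (n q : nat) (d : int) (j s d0 e : R)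
    (fc : nat -> R) (mu1 mu2 mu3 : R) :
  (2 <= q)%N -> (q <= n)%N ->
  (* j is defined by d = n - 1 - (n - 2 + j)/q *)
  d%:~R = n%:R - 1 - (n%:R - 2 + j) / q%:R ->
  0 <= j -> j < (Num.sqrt (q%:R ^+ 2 + 4 * (q%:R - 1) * (n%:R - 2)) - q%:R) / 2 ->
  s = 1 - 2 * d%:~R / n%:R ->
  d0 = n%:R - j * (n%:R - 1) / (q%:R * (j + q%:R - 1)) ->
  (* e is the unique number in (0,1] with d0 + e integral *)
  0 < e -> e <= 1 -> (exists k : int, d0 + e = k%:~R) ->
  (* f = sum_{i=0}^3 f_i Q_i *)
  (forall t : R,
     (t + 1 + 2 * e / n%:R - 2 * j * (n%:R - 1) / (n%:R * q%:R * (j + q%:R - 1)))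
     * (t + 1 + 2 * (e - 1) / n%:R - 2 * j * (n%:R - 1) / (n%:R * q%:R * (j + q%:R - 1)))
     * (t - s)
     = \sum_(i < 4) fc i * Qpol n q i t) ->
  (* (mu_d, mu_{d0+e-1}, mu_{d0+e}) solves the linear system *)
  (forall l : nat, (1 <= l <= 3)%N ->
     mu1 * (kraw n q l d%:~R / rr R n q l)
     + mu2 * (kraw n q l (d0 + e - 1) / rr R n q l)
     + mu3 * (kraw n q l (d0 + e) / rr R n q l) = -1) ->
  (* lambda_i^* >= 0 for 4 <= i <= n *)
  (forall i : nat, (4 <= i <= n)%N ->
     0 <= 1 + mu1 * (kraw n q i d%:~R / rr R n q i)
          + mu2 * (kraw n q i (d0 + e - 1) / rr R n q i)
          + mu3 * (kraw n q i (d0 + e) / rr R n q i)) ->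
  forall (m : nat) (h : nat -> R),
    (m <= n)%N ->
    0 < h 0%N ->
    (forall i : nat, (i <= m)%N -> 0 <= h i) ->
    (forall t : R, inTn n t -> -1 <= t -> t <= s ->
       \sum_(i < m.+1) h i * Qpol n q i t <= 0) ->
    (\sum_(i < m.+1) h i * Qpol n q i 1) / h 0%N >=
    ((1 + 1 + 2 * e / n%:R - 2 * j * (n%:R - 1) / (n%:R * q%:R * (j + q%:R - 1)))
     * (1 + 1 + 2 * (e - 1) / n%:R - 2 * j * (n%:R - 1) / (n%:R * q%:R * (j + q%:R - 1)))
     * (1 - s)) / fc 0%N.
Proof.
move=> q_ge2 q_le_n def_d j_ge0 j_lt def_s def_d0 e_gt0 e_le1 [k def_k] def_f system
  coef_ge4 m h m_le_n h0_gt0 h_ge0 h_feasible.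
have adm : admissible n%:R q%:R j by apply: admissible_of_lt_root; rewrite ?ler_nat.
have n_ge3 : (3 <= n)%N by rewrite -(ltr_nat R) (adm_N_gt2 adm).
have n_gt0 : (0 < n)%N by apply: leq_trans n_ge3.
change (d%:~R = dist_d n%:R q%:R j) in def_d.
change (d0 = dist_d0 n%:R q%:R j) in def_d0.
have := krawtchouk_quadrature q_ge2 n_ge3 system; rewrite def_d def_d0 => quad.
have [mu1_ge0 mu2_ge0 mu3_ge0 mu3_eq0] := dual_weights_ge0 adm e_gt0 e_le1 quad.
have := dist_d_gt0 adm; have := dist_d_le_d0 adm; have := dist_d0_leN adm.
rewrite -def_d -def_d0 => d0_le d_le d_gt0.
have node_le0 := feasible_at_dist n_gt0 def_s h_feasible.
have def_k1 : d0 + e - 1 = (k - 1)%:~R by rewrite intrB def_k.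
have f_roots (t : R) : (t - (1 - 2 * d%:~R / n%:R)) * (t - (1 - 2 * (d0 + e - 1) / n%:R))
    * (t - (1 - 2 * (d0 + e) / n%:R)) = \sum_(i < 4) fc i * Qpol n q i t.
  rewrite -def_f def_s def_d0 /dist_d0; case: adm => Q_ge2 *; field.
  by rewrite pnatr_eq0 -lt0n n_gt0 /= !gt_eqF //; lra.
rewrite def_f -f_roots; apply: (lp_ratio_bound q_ge2 n_ge3 system coef_ge4) => //; try lra.
- by rewrite mulr_ge0_le0 // node_le0 //; lra.
- by rewrite mulr_ge0_le0 // def_k1 node_le0 //; rewrite -?def_k1; lra.
have [le_n | gt_n] := lerP (d0 + e) n%:R.
  by rewrite mulr_ge0_le0 // def_k node_le0 //; rewrite -?def_k; lra.
(* [d0 <= n < d0 + e] with [d0 + e] integral forces [e = 1]. *)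
have : (n%:Z < k)%R by rewrite -(ltr_int R) -def_k.
rewrite -lezD1 -(ler_int R) intrD -def_k => ge_n1.
by rewrite mu3_eq0 ?mul0r //; lra.
Qed.
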